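(* Every subtheory $\mathscr T$ of a commutative $\mathscr J$-theory $\mathscr U$ is commutative.
   Context: $(\mathscr V,\otimes,I)$ is a closed symmetric monoidal category, $\underline{\mathscr V}$ the associated $\mathscr V$-category; everything is $\mathscr V$-enriched. A system of arities is a full sub-$\mathscr V$-category $\mathscr J\hookrightarrow\underline{\mathscr V}$ containing $I$ and closed under $\otimes$. A cotensor $[V,C]$ is an object with counit $V\to\mathscr C([V,C],C)$ inducing $\mathscr C(-,[V,C])\cong\underline{\mathscr V}(V,\mathscr C(-,C))$. A $\mathscr J$-theory is a $\mathscr V$-category $\mathscr T$ with $\mathrm{ob}\,\mathscr T=\mathrm{ob}\,\mathscr J$ and an identity-on-objects $\tau:\mathscr J^{\mathrm{op}}\to\mathscr T$ preserving cotensors by objects of $\mathscr J$; a morphism $(\mathscr T,\tau)\to(\mathscr U,\upsilon)$ is a $\mathscr V$-functor with $A\tau=\upsilon$; a subtheory of $\mathscr U$ is a $\mathscr J$-theory $\mathscr T$ with a morphism $\mathscr T\to\mathscr U$ whose hom-components are monomorphisms. In a theory $(\mathscr T,\tau)$, $J\otimes K$ and $K\otimes J$ are cotensors of $K$ by $J$ with counits $J\xrightarrow{\mathrm{Coev}}\underline{\mathscr V}(K,J\otimes K)=\mathscr J^{\mathrm{op}}(J\otimes K,K)\xrightarrow{\tau}\mathscr T(J\otimes K,K)$ and $J\xrightarrow{\mathrm{Coev}'}\underline{\mathscr V}(K,K\otimes J)\xrightarrow{\tau}\mathscr T(K\otimes J,K)$ ($\mathrm{Coev}'$ = coevaluation composed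 with symmetry), inducing $\mathscr V$-functors $[J,-]_\ell$ ($K\mapsto J\otimes K$) and $[J,-]_r$ ($K\mapsto K\otimes J$). The Kronecker products $\mathsf k,\tilde{\mathsf k}:\mathscr T(J,J')\otimes\mathscr T(K,K')\to\mathscr T(J\otimes K,J'\otimes K')$ are composition after $[K,-]_r\otimes[J',-]_\ell$ (into $\mathscr T(J\otimes K,J'\otimes K)\otimes\mathscr T(J'\otimes K,J'\otimes K')$), resp. after $[K',-]_r\otimes[J,-]_\ell$ (into $\mathscr T(J\otimes K',J'\otimes K')\otimes\mathscr T(J\otimes K,J\otimes K')$). A theory is commutative if $\mathsf k=\tilde{\mathsf k}$ for all $J,J',K,K'$. *)

Set Implicit Arguments.
Unset Strict Implicit.


(* Composition is written in diagrammatic order: cmp f g = "g o f".    *)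

Record CSMC := {
  ob :> Type;
  hom : ob -> ob -> Type;
  idm : forall a, hom a a;
  cmp : forall a b c, hom a b -> hom b c -> hom a c;
  cmp_id_l : forall a b (f : hom a b), cmp (idm a) f = f;
  cmp_id_r : forall a b (f : hom a b), cmp f (idm b) = f;
  cmp_assoc : forall a b c d (f : hom a b) (g : hom b c) (h : hom c d),
      cmp (cmp f g) h = cmp f (cmp g h);

  tens : ob -> ob -> ob;
  tensm : forall a b c d, hom a b -> hom c d -> hom (tens a c) (tens b d);
  tensm_id : forall a b, tensm (idm a) (idm b) = idm (tens a b);
  tensm_cmp : forall a b c a' b' c' (f : hom a b) (g : hom b c)
      (f' : hom a' b') (g' : hom b' c'),
      tensm (cmp f g) (cmp f' g') = cmp (tensm f f') (tensm g g');

  unit : ob;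
  alpha : forall a b c, hom (tens (tens a b) c) (tens a (tens b c));
  alpha_inv : forall a b c, hom (tens a (tens b c)) (tens (tens a b) c);
  alpha_iso1 : forall a b c, cmp (alpha a b c) (alpha_inv a b c) = idm _;
  alpha_iso2 : forall a b c, cmp (alpha_inv a b c) (alpha a b c) = idm _;
  alpha_nat : forall a a' b b' c c' (f : hom a a') (g : hom b b') (h : hom c c'),
      cmp (tensm (tensm f g) h) (alpha a' b' c')
      = cmp (alpha a b c) (tensm f (tensm g h));
  lam : forall a, hom (tens unit a) a;
  lam_inv : forall a, hom a (tens unit a);
  lam_iso1 : forall a, cmp (lam a) (lam_inv a) = idm _;
  lam_iso2 : forall a, cmp (lam_inv a) (lam a) = idm _;
  lam_nat : forall a b (f : hom a b),
      cmp (tensm (idm unit) f) (lam b) = cmp (lam a) f;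
  rho : forall a, hom (tens a unit) a;
  rho_inv : forall a, hom a (tens a unit);
  rho_iso1 : forall a, cmp (rho a) (rho_inv a) = idm _;
  rho_iso2 : forall a, cmp (rho_inv a) (rho a) = idm _;
  rho_nat : forall a b (f : hom a b),
      cmp (tensm f (idm unit)) (rho b) = cmp (rho a) f;
  pentagon : forall a b c d,
      cmp (alpha (tens a b) c d) (alpha a b (tens c d))
      = cmp (cmp (tensm (alpha a b c) (idm d)) (alpha a (tens b c) d))
            (tensm (idm a) (alpha b c d));
  triangle : forall a b,
      cmp (alpha a unit b) (tensm (idm a) (lam b)) = tensm (rho a) (idm b);

  sym : forall a b, hom (tens a b) (tens b a);
  sym_nat : forall a a' b b' (f : hom a a') (g : hom b b'),
      cmp (tensm f g) (sym a' b') = cmp (sym a b) (tensm g f);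
  sym_inv : forall a b, cmp (sym a b) (sym b a) = idm _;
  hexagon : forall a b c,
      cmp (cmp (alpha a b c) (sym a (tens b c))) (alpha b c a)
      = cmp (cmp (tensm (sym a b) (idm c)) (alpha b a c))
            (tensm (idm b) (sym a c));

  ihom : ob -> ob -> ob;
  ev : forall a b, hom (tens (ihom a b) a) b;
  curry : forall x a b, hom (tens x a) b -> hom x (ihom a b);
  curry_ev : forall x a b (f : hom (tens x a) b),
      cmp (tensm (curry f) (idm a)) (ev a b) = f;
  curry_uniq : forall x a b (g : hom x (ihom a b)),
      curry (cmp (tensm g (idm a)) (ev a b)) = g
}.

Arguments hom {V} : rename.
Arguments idm {V} a : rename.
Arguments cmp {V a b c} : rename.
Arguments tens {V} : rename.
Arguments tensm {V a b c d} : rename.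
Arguments unit {V} : rename.
Arguments alpha {V} a b c : rename.
Arguments lam {V} a : rename.
Arguments rho {V} a : rename.
Arguments sym {V} a b : rename.
Arguments ihom {V} : rename.
Arguments ev {V} a b : rename.
Arguments curry {V x a b} : rename.

Declare Scope cat_scope.
Delimit Scope cat_scope with cat.
Open Scope cat_scope.
Notation "f ;; g" := (cmp f g) (at level 40, left associativity) : cat_scope.
Notation "f <*> g" := (tensm f g) (at level 35) : cat_scope.
Notation "a (x) b" := (tens a b) (at level 34, right associativity) : cat_scope.

Unset Implicit Arguments.
Section Enriched.
Variable V : CSMC.

Record VCatData (O : Type) := {
  vhom : O -> O -> V;
  vcomp : forall a b c, hom (vhom a b (x) vhom b c) (vhom a c);
  vid : forall a, hom unit (vhom a a)
}.
Arguments vhom {O} _ _ _.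
Arguments vcomp {O} _ _ _ _.
Arguments vid {O} _ _.

Definition is_VCat {O : Type} (C : VCatData O) : Prop :=
  (forall a b c d,
     (vcomp C a b c <*> idm _) ;; vcomp C a c d
     = alpha _ _ _ ;; (idm _ <*> vcomp C b c d) ;; vcomp C a b d)
  /\ (forall a b, (vid C a <*> idm _) ;; vcomp C a a b = lam (vhom C a b))
  /\ (forall a b, (idm _ <*> vid C b) ;; vcomp C a b b = rho (vhom C a b)).

Definition is_VFunctor_io {O : Type} (C D : VCatData O)
    (F : forall a b, hom (vhom C a b) (vhom D a b)) : Prop :=
  (forall a b c, vcomp C a b c ;; F a c = (F a b <*> F b c) ;; vcomp D a b c)
  /\ (forall a, vid C a ;; F a a = vid D a).

Definition is_mono {a b : V} (f : hom a b) : Prop :=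
  forall x (g h : hom x a), g ;; f = h ;; f -> g = h.

Definition is_iso {a b : V} (f : hom a b) : Prop :=
  exists g : hom b a, f ;; g = idm a /\ g ;; f = idm b.

(* Cotensor [v, c] = c' of c by v : V, with counit e : v -> C(c', c):
   the induced map C(x, c') -> [v, C(x, c)] is invertible for every x. *)
Definition is_cotensor {O : Type} (C : VCatData O) (v : V) (c c' : O)
    (e : hom v (vhom C c' c)) : Prop :=
  forall x : O, is_iso (curry ((idm (vhom C x c') <*> e) ;; vcomp C x c' c)).

Definition ucomp (a b c : V) : hom (ihom a b (x) ihom b c) (ihom a c) :=
  curry ((sym (ihom a b) (ihom b c) <*> idm a) ;; alpha _ _ _
         ;; (idm _ <*> ev a b) ;; ev b c).

Definition uid (a : V) : hom unit (ihom a a) := curry (lam a).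

(* A system of arities: a full sub-V-category of underline V, given by
   its class of objects, containing I and closed under (x). *)
Record Arities := {
  arity : V -> Prop;
  arity_unit : arity unit;
  arity_tens : forall a b, arity a -> arity b -> arity (a (x) b)
}.

Variable J : Arities.

Definition jobj : Type := { a : V | arity J a }.
Definition jtens (a b : jobj) : jobj :=
  exist _ (proj1_sig a (x) proj1_sig b)
        (@arity_tens J _ _ (proj2_sig a) (proj2_sig b)).

Definition Jop : VCatData jobj := {|
  vhom := fun a b => ihom (proj1_sig b) (proj1_sig a);
  vcomp := fun a b c =>
    sym _ _ ;; ucomp (proj1_sig c) (proj1_sig b) (proj1_sig a);
  vid := fun a => uid (proj1_sig a)
|}.

Record JTheory := {
  th_cat : VCatData jobj;
  th_tau : forall a b, hom (vhom Jop a b) (vhom th_cat a b);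
  th_is_VCat : is_VCat th_cat;
  th_tau_functor : @is_VFunctor_io _ Jop th_cat th_tau;
  th_tau_cotensors : forall (j k c : jobj) (e : hom (proj1_sig j) (vhom Jop c k)),
      @is_cotensor _ Jop (proj1_sig j) k c e ->
      @is_cotensor _ th_cat (proj1_sig j) k c (e ;; th_tau c k)
}.

Definition is_theory_morphism (T U : JTheory)
    (A : forall a b, hom (vhom (th_cat T) a b) (vhom (th_cat U) a b)) : Prop :=
  @is_VFunctor_io _ (th_cat T) (th_cat U) A
  /\ (forall a b, th_tau T a b ;; A a b = th_tau U a b).

Definition is_subtheory_via (T U : JTheory)
    (A : forall a b, hom (vhom (th_cat T) a b) (vhom (th_cat U) a b)) : Prop :=
  is_theory_morphism T U A /\ (forall a b, is_mono (A a b)).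

Definition coev (j k : V) : hom j (ihom k (j (x) k)) := curry (idm (j (x) k)).
Definition coev' (j k : V) : hom j (ihom k (k (x) j)) := curry (sym j k).

(* counits of the cotensors  J(x)K = [J,K]_l  and  K(x)J = [J,K]_r  *)
Definition counit_l (T : JTheory) (j k : jobj)
  : hom (proj1_sig j) (vhom (th_cat T) (jtens j k) k) :=
  coev (proj1_sig j) (proj1_sig k) ;; th_tau T (jtens j k) k.
Definition counit_r (T : JTheory) (j k : jobj)
  : hom (proj1_sig j) (vhom (th_cat T) (jtens k j) k) :=
  coev' (proj1_sig j) (proj1_sig k) ;; th_tau T (jtens k j) k.

(* m : T(k,k') -> T(c j k, c j k') is the hom-component of the V-functor
   [j,-] induced by the cotensors (c j k, e j k) : it is the (unique, the
   cotensor iso being invertible) map compatible with the counits: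
      (m (x) e_{j,k'}) ; M  =  sym ; (e_{j,k} (x) 1) ; M
   as maps T(k,k') (x) j -> T(c j k, k'). *)
Definition is_induced_map (T : JTheory) (c : jobj -> jobj -> jobj)
    (e : forall j k, hom (proj1_sig j) (vhom (th_cat T) (c j k) k))
    (j k k' : jobj)
    (m : hom (vhom (th_cat T) k k') (vhom (th_cat T) (c j k) (c j k'))) : Prop :=
  (m <*> e j k') ;; vcomp (th_cat T) (c j k) (c j k') k'
  = sym _ _ ;; (e j k <*> idm _) ;; vcomp (th_cat T) (c j k) k k'.

Definition is_cot_l (T : JTheory) (j k k' : jobj) m :=
  @is_induced_map T jtens (counit_l T) j k k' m.
Definition is_cot_r (T : JTheory) (j k k' : jobj) m :=
  @is_induced_map T (fun j k => jtens k j) (counit_r T) j k k' m.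

(* Commutativity: the Kronecker products k and k~ agree.
   k  = M o ([K,-]_r (x) [J',-]_l)  with
        [K,-]_r : T(J,J') -> T(J(x)K, J'(x)K),
        [J',-]_l : T(K,K') -> T(J'(x)K, J'(x)K');
   k~ = M o ([K',-]_r (x) [J,-]_l)  with
        [K',-]_r : T(J,J') -> T(J(x)K', J'(x)K'),
        [J,-]_l : T(K,K') -> T(J(x)K, J(x)K'),
   the composite T(J(x)K',J'(x)K') (x) T(J(x)K,J(x)K') -> T(J(x)K,J'(x)K')
   being taken in the only well-typed way (after a symmetry).  The functor
   components are specified by their defining (uniquely determining)
   property is_cot_r / is_cot_l. *)
Definition is_commutative (T : JTheory) : Prop :=
  forall (j j' k k' : jobj)
    (r1 : hom (vhom (th_cat T) j j') (vhom (th_cat T) (jtens j k) (jtens j' k)))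
    (l1 : hom (vhom (th_cat T) k k') (vhom (th_cat T) (jtens j' k) (jtens j' k')))
    (r2 : hom (vhom (th_cat T) j j') (vhom (th_cat T) (jtens j k') (jtens j' k')))
    (l2 : hom (vhom (th_cat T) k k') (vhom (th_cat T) (jtens j k) (jtens j k'))),
    is_cot_r T k j j' r1 -> is_cot_l T j' k k' l1 ->
    is_cot_r T k' j j' r2 -> is_cot_l T j k k' l2 ->
    (r1 <*> l1) ;; vcomp (th_cat T) (jtens j k) (jtens j' k) (jtens j' k')
    = (r2 <*> l2) ;; sym _ _
      ;; vcomp (th_cat T) (jtens j k) (jtens j k') (jtens j' k').

End Enriched.

Arguments vhom {V O} _ _ _.
Arguments vcomp {V O} _ _ _ _.
Arguments vid {V O} _ _.
Arguments th_cat {V J} _.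
Arguments th_tau {V J} _ _ _.
Arguments is_subtheory_via {V J} T U A.
Arguments is_commutative {V J} T.


(* A theory morphism A preserves the counits of the cotensors J (x) K and
   K (x) J, since A tau = upsilon.  In U these are genuine cotensors, so a map
   into them is determined by its composite with the counit; hence A commutes
   with the induced V-functors [J,-]_l and [J,-]_r, and therefore carries both
   Kronecker products of T to the corresponding ones of U.  These agree, and A
   is a monomorphism on homs, so they already agree in T. *)

Section Monoidal.
Variable V : CSMC.

Lemma tensm_cmp_l (a b c d : V) (f : hom a b) (g : hom b c) :
  (f ;; g) <*> idm d = (f <*> idm d) ;; (g <*> idm d).
Proof. rewrite <- tensm_cmp, cmp_id_l. reflexivity. Qed.

Lemma tensm_cmp_r (a b c d : V) (f : hom a b) (g : hom b c) :
  idm d <*> (f ;; g) = (idm d <*> f) ;; (idm d <*> g).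
Proof. rewrite <- tensm_cmp, cmp_id_l. reflexivity. Qed.

Lemma tensm_lr (a b c d : V) (f : hom a b) (g : hom c d) :
  (f <*> idm c) ;; (idm b <*> g) = f <*> g.
Proof. rewrite <- tensm_cmp, cmp_id_l, cmp_id_r. reflexivity. Qed.

Lemma tensm_rl (a b c d : V) (f : hom a b) (g : hom c d) :
  (idm a <*> g) ;; (f <*> idm d) = f <*> g.
Proof. rewrite <- tensm_cmp, cmp_id_l, cmp_id_r. reflexivity. Qed.

Lemma alpha_inv_nat (a a' b b' c c' : V) (f : hom a a') (g : hom b b') (h : hom c c') :
  alpha_inv a b c ;; ((f <*> g) <*> h) = (f <*> (g <*> h)) ;; alpha_inv a' b' c'.
Proof.
  rewrite <- (cmp_id_r (alpha_inv a b c ;; _)).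
  rewrite <- (alpha_iso1 a' b' c'), <- cmp_assoc, (cmp_assoc _ _ (alpha _ _ _)).
  rewrite alpha_nat, <- cmp_assoc, alpha_iso2, cmp_id_l. reflexivity.
Qed.

Lemma curry_nat (x y a b : V) (f : hom x y) (g : hom (y (x) a) b) :
  f ;; curry g = curry ((f <*> idm a) ;; g).
Proof.
  rewrite <- (curry_uniq (f ;; curry g)). f_equal.
  rewrite tensm_cmp_l, cmp_assoc, curry_ev. reflexivity.
Qed.

Lemma curry_inj (x a b : V) (f g : hom (x (x) a) b) : curry f = curry g -> f = g.
Proof. intro H. rewrite <- (curry_ev f), <- (curry_ev g), H. reflexivity. Qed.

Lemma curry_ev_idm (a b : V) : curry (ev a b) = idm (ihom a b).
Proof.
  rewrite <- (curry_uniq (idm (ihom a b))), tensm_id, cmp_id_l. reflexivity.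
Qed.

Section UnderlyingCotensor.
Variables v b c x : V.
Variable s : hom (v (x) b) c.
Variable s' : hom c (v (x) b).
Hypothesis s_s' : s ;; s' = idm _.
Hypothesis s'_s : s' ;; s = idm _.

Let P : hom ((ihom c x (x) v) (x) b) x := alpha _ v b ;; (idm _ <*> s) ;; ev c x.

Lemma ucomp_counit_transpose :
  curry ((idm (ihom c x) <*> curry s) ;; (sym _ _ ;; ucomp V b c x)) = curry (curry P).
Proof.
  f_equal. unfold ucomp. rewrite <- cmp_assoc, curry_nat. f_equal.
  unfold P. rewrite (tensm_cmp_l _ _ _ b (idm _ <*> curry s) (sym _ _)), !cmp_assoc.
  rewrite <- (cmp_assoc (sym _ _ <*> idm b)), <- tensm_cmp_l, sym_inv, tensm_id, cmp_id_l.
  rewrite <- cmp_assoc, alpha_nat, !cmp_assoc. f_equal.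
  rewrite <- cmp_assoc, <- tensm_cmp_r, curry_ev. reflexivity.
Qed.

Let P_inv : hom (ihom v (ihom b x)) (ihom c x) :=
  curry ((idm _ <*> s') ;; alpha_inv _ _ _ ;; (ev v (ihom b x) <*> idm b) ;; ev b x).

Lemma transpose_inv_r : curry (curry P) ;; P_inv = idm _.
Proof.
  unfold P_inv. rewrite curry_nat, <- (curry_ev_idm c x). f_equal.
  rewrite <- !cmp_assoc, tensm_lr, <- tensm_rl, <- (tensm_id v b).
  rewrite (cmp_assoc _ _ (alpha_inv _ _ _)), <- alpha_inv_nat.
  rewrite !cmp_assoc, <- (cmp_assoc ((curry (curry P) <*> idm v) <*> idm b)).
  rewrite <- tensm_cmp_l, !curry_ev. unfold P.
  rewrite !cmp_assoc, <- (cmp_assoc (alpha_inv _ _ _) (alpha _ _ _)), alpha_iso2, cmp_id_l.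
  rewrite <- cmp_assoc, <- tensm_cmp_r, s'_s, tensm_id, cmp_id_l. reflexivity.
Qed.

Lemma transpose_inv_l : P_inv ;; curry (curry P) = idm _.
Proof.
  rewrite curry_nat, curry_nat, <- (curry_ev_idm v (ihom b x)). f_equal.
  rewrite <- (curry_uniq (ev v (ihom b x))). f_equal.
  unfold P, P_inv. set (Q := idm _ <*> s' ;; _ ;; _ ;; _).
  rewrite <- !cmp_assoc, alpha_nat, tensm_id.
  rewrite (cmp_assoc (alpha _ _ _) (curry Q <*> _)), tensm_lr, <- tensm_rl.
  rewrite !cmp_assoc, curry_ev. unfold Q.
  rewrite <- !(cmp_assoc (_ <*> s)), <- (tensm_cmp_r _ _ _ _ s s'), s_s', tensm_id, cmp_id_l.
  rewrite <- !(cmp_assoc (alpha _ _ _)), alpha_iso1, cmp_id_l. reflexivity.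
Qed.

(* An isomorphism s : v (x) b ~ c exhibits c as the cotensor [v, b] of the
   V-category J^op, i.e. of underline V read backwards. *)
Lemma ucomp_cotensor_iso :
  is_iso V (curry ((idm (ihom c x) <*> curry s) ;; (sym _ _ ;; ucomp V b c x))).
Proof.
  rewrite ucomp_counit_transpose. exists P_inv.
  split; [exact transpose_inv_r | exact transpose_inv_l].
Qed.

End UnderlyingCotensor.

End Monoidal.

Section Theories.
Variable V : CSMC.
Variable J : Arities V.

Lemma Jop_cotensor_of_iso (v : V) (b c : jobj V J)
    (s : hom (v (x) proj1_sig b) (proj1_sig c)) (s' : hom (proj1_sig c) (v (x) proj1_sig b)) :
  s ;; s' = idm _ -> s' ;; s = idm _ -> is_cotensor V (Jop V J) v b c (curry s).
Proof. intros s_s' s'_s x. exact (ucomp_cotensor_iso V v _ _ _ s s' s_s' s'_s). Qed.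

Lemma counit_l_cotensor (W : JTheory V J) (j k : jobj V J) :
  is_cotensor V (th_cat W) (proj1_sig j) k (jtens V J j k) (counit_l V J W j k).
Proof.
  apply th_tau_cotensors, Jop_cotensor_of_iso with (s' := idm _); apply cmp_id_l.
Qed.

Lemma counit_r_cotensor (W : JTheory V J) (j k : jobj V J) :
  is_cotensor V (th_cat W) (proj1_sig j) k (jtens V J k j) (counit_r V J W j k).
Proof.
  apply th_tau_cotensors, Jop_cotensor_of_iso with (s' := sym _ _); apply sym_inv.
Qed.

Lemma cotensor_counit_cancel (W : JTheory V J) (v : V) (k c : jobj V J)
    (e : hom v (vhom (th_cat W) c k)) :
  is_cotensor V (th_cat W) v k c e ->
  forall (X : V) (a : jobj V J) (f g : hom X (vhom (th_cat W) a c)),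
  (f <*> e) ;; vcomp (th_cat W) a c k = (g <*> e) ;; vcomp (th_cat W) a c k ->
  f = g.
Proof.
  intros Hc X a f g Hfg. destruct (Hc a) as [h [h_inv _]].
  assert (Ecurry : forall f : hom X (vhom (th_cat W) a c),
     f ;; curry ((idm _ <*> e) ;; vcomp (th_cat W) a c k)
     = curry ((f <*> e) ;; vcomp (th_cat W) a c k)).
  { intro f'. rewrite curry_nat, <- cmp_assoc, tensm_lr. reflexivity. }
  rewrite <- (cmp_id_r f), <- (cmp_id_r g), <- h_inv, <- !cmp_assoc, !Ecurry, Hfg.
  reflexivity.
Qed.

Lemma induced_map_exists (W : JTheory V J) (c : jobj V J -> jobj V J -> jobj V J)
    (e : forall j k, hom (proj1_sig j) (vhom (th_cat W) (c j k) k)) (j k k' : jobj V J) :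
  is_cotensor V (th_cat W) (proj1_sig j) k' (c j k') (e j k') ->
  exists m, is_induced_map V J W c e j k k' m.
Proof.
  intros Hc. destruct (Hc (c j k)) as [g [_ g_inv]].
  exists (curry (sym _ _ ;; (e j k <*> idm _) ;; vcomp (th_cat W) _ _ _) ;; g).
  apply curry_inj.
  rewrite <- tensm_lr, cmp_assoc, <- curry_nat, cmp_assoc, g_inv, cmp_id_r. reflexivity.
Qed.

Section Morphism.
Variables T U : JTheory V J.
Variable A : forall a b : jobj V J, hom (vhom (th_cat T) a b) (vhom (th_cat U) a b).
Hypothesis A_morphism : is_theory_morphism V J T U A.

Lemma theory_morphism_comp (a b c : jobj V J) (X Y : V)
    (f : hom X (vhom (th_cat T) a b)) (g : hom Y (vhom (th_cat T) b c)) :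
  (f <*> g) ;; vcomp (th_cat T) a b c ;; A a c
  = ((f ;; A a b) <*> (g ;; A b c)) ;; vcomp (th_cat U) a b c.
Proof.
  destruct A_morphism as [[A_comp _] _].
  rewrite cmp_assoc, A_comp, <- cmp_assoc, <- tensm_cmp. reflexivity.
Qed.

Lemma theory_morphism_counit_l (j k : jobj V J) :
  counit_l V J U j k = counit_l V J T j k ;; A _ _.
Proof.
  destruct A_morphism as [_ A_tau]. unfold counit_l. rewrite <- A_tau, cmp_assoc.
  reflexivity.
Qed.

Lemma theory_morphism_counit_r (j k : jobj V J) :
  counit_r V J U j k = counit_r V J T j k ;; A _ _.
Proof.
  destruct A_morphism as [_ A_tau]. unfold counit_r. rewrite <- A_tau, cmp_assoc.
  reflexivity.
Qed.

Lemma theory_morphism_induced_map (c : jobj V J -> jobj V J -> jobj V J)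
    (eT : forall j k, hom (proj1_sig j) (vhom (th_cat T) (c j k) k))
    (eU : forall j k, hom (proj1_sig j) (vhom (th_cat U) (c j k) k))
    (j k k' : jobj V J) mT mU :
  (forall j k, eU j k = eT j k ;; A _ _) ->
  is_cotensor V (th_cat U) (proj1_sig j) k' (c j k') (eU j k') ->
  is_induced_map V J T c eT j k k' mT -> is_induced_map V J U c eU j k k' mU ->
  mT ;; A _ _ = A _ _ ;; mU.
Proof.
  intros HeU Hc HmT HmU. apply (cotensor_counit_cancel U _ _ _ _ Hc).
  transitivity (sym _ _ ;; (eU j k <*> A k k') ;; vcomp (th_cat U) _ _ _).
  - rewrite !HeU, <- theory_morphism_comp, HmT, !cmp_assoc.
    rewrite <- (cmp_assoc (eT j k <*> idm _)), theory_morphism_comp, cmp_id_l.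
    reflexivity.
  - rewrite <- (cmp_id_l (eU j k')), tensm_cmp, (cmp_assoc (A k k' <*> _)), HmU.
    rewrite <- !cmp_assoc, sym_nat, (cmp_assoc (sym _ _) (idm _ <*> _)), tensm_rl.
    reflexivity.
Qed.

End Morphism.

End Theories.

Theorem proposition5p16 (V : CSMC) (J : Arities V) (T U : JTheory V J)
    (A : forall a b : jobj V J,
         hom (vhom (th_cat T) a b) (vhom (th_cat U) a b)) :
  is_subtheory_via T U A -> is_commutative U -> is_commutative T.
Proof.
  intros [A_morphism A_mono] U_comm j j' k k' r1 l1 r2 l2 Hr1 Hl1 Hr2 Hl2.
  pose proof (theory_morphism_counit_l V J T U A A_morphism) as EL.
  pose proof (theory_morphism_counit_r V J T U A A_morphism) as ER.
  destruct (induced_map_exists V J U _ _ k j j' (counit_r_cotensor V J U k j')) as [s1 Hs1].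
  destruct (induced_map_exists V J U _ _ j' k k' (counit_l_cotensor V J U j' k')) as [t1 Ht1].
  destruct (induced_map_exists V J U _ _ k' j j' (counit_r_cotensor V J U k' j')) as [s2 Hs2].
  destruct (induced_map_exists V J U _ _ j k k' (counit_l_cotensor V J U j k')) as [t2 Ht2].
  pose proof (theory_morphism_induced_map V J T U A A_morphism _ _ _ _ _ _ _ _
                ER (counit_r_cotensor V J U k j') Hr1 Hs1) as N1.
  pose proof (theory_morphism_induced_map V J T U A A_morphism _ _ _ _ _ _ _ _
                EL (counit_l_cotensor V J U j' k') Hl1 Ht1) as N2.
  pose proof (theory_morphism_induced_map V J T U A A_morphism _ _ _ _ _ _ _ _
                ER (counit_r_cotensor V J U k' j') Hr2 Hs2) as N3.
  pose proof (theory_morphism_induced_map V J T U A A_morphism _ _ _ _ _ _ _ _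
                EL (counit_l_cotensor V J U j k') Hl2 Ht2) as N4.
  apply A_mono.
  transitivity ((A _ _ <*> A _ _) ;; ((s1 <*> t1) ;; vcomp (th_cat U) _ _ _)).
  { rewrite theory_morphism_comp, N1, N2, tensm_cmp, cmp_assoc by exact A_morphism.
    reflexivity. }
  rewrite (U_comm _ _ _ _ _ _ _ _ Hs1 Ht1 Hs2 Ht2). symmetry.
  rewrite (sym_nat r2 l2), !(cmp_assoc (sym _ _)), theory_morphism_comp, N3, N4, tensm_cmp
    by exact A_morphism.
  rewrite (sym_nat s2 t2), <- !cmp_assoc, (sym_nat (A _ _) (A _ _)).
  reflexivity.
Qed.
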